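(* Let $\mathcal{F}$ be a vector space over a field $K$, let $T \colon \mathcal{F} \to \mathcal{F}$ be a surjective linear map, let $\mathcal{B} \leq \mathcal{F}^*$ be a finite-dimensional subspace and $\mathcal{E} \leq \mathcal{F}$ a subspace such that $\mathcal{B}^{\perp} \cap \operatorname{Ker} T = \{0\}$ and $\mathcal{F} = T(\mathcal{B}^{\perp}) \dotplus \mathcal{E}$. Let $\tilde{\mathcal{B}} \leq \mathcal{B}$ be a subspace such that the boundary problem $(T, \tilde{\mathcal{B}})$ is regular, i.e. for every $f \in \mathcal{F}$ there is exactly one $u \in \tilde{\mathcal{B}}^{\perp}$ with $Tu = f$; denote by $\tilde G \colon \mathcal{F} \to \mathcal{F}$ the map sending $f$ to this $u$. Let $Q$ be the projector onto $T(\mathcal{B}^{\perp})$ along $\mathcal{E}$, and let $G \colon \mathcal{F} \to \mathcal{F}$ be the generalized Green's operator of $(T,\mathcal{B},\mathcal{E})$, which maps each $f \in \mathcal{F}$ to the unique $u \in \mathcal{B}^{\perp}$ with $Tu = Qf$. Then $G = \tilde G\, Q$.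
   Context: $\mathcal{F}^*$ denotes the algebraic dual of $\mathcal{F}$; for $\mathcal{B} \leq \mathcal{F}^*$, $\mathcal{B}^{\perp} = \{v \in \mathcal{F} : \beta(v) = 0 \text{ for all } \beta \in \mathcal{B}\}$. The projector onto $T(\mathcal{B}^{\perp})$ along $\mathcal{E}$ is the linear idempotent map with image $T(\mathcal{B}^{\perp})$ and kernel $\mathcal{E}$. *)

From HB Require Import structures.
From mathcomp Require Import all_boot all_order all_algebra.
Set Implicit Arguments. Unset Strict Implicit. Unset Printing Implicit Defensive.
Import GRing.Theory.
Local Open Scope ring_scope.

(* Linear functionals on V: elements of the algebraic dual F^*. *)
Notation dualv K V := {linear V -> K^o}.

Section Defs.
Variables (K : fieldType) (V : lmodType K).

(* beta lies in the (finite-dimensional) subspace of V^* spanned by b. *)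
Definition in_span (n : nat) (b : 'I_n -> dualv K V) (beta : V -> K) : Prop :=
  exists c : 'I_n -> K, forall v, beta v = \sum_(i < n) c i * b i v.

Definition perp (n : nat) (b : 'I_n -> dualv K V) (v : V) : Prop :=
  forall beta : dualv K V, in_span b beta -> beta v = 0.

Definition subspace (E : V -> Prop) : Prop :=
  E 0 /\ (forall x y, E x -> E y -> E (x + y)) /\ (forall (a : K) x, E x -> E (a *: x)).

Definition direct_sum_decomp (A E : V -> Prop) : Prop :=
  (forall f, exists a e, A a /\ E e /\ f = a + e) /\
  (forall x, A x -> E x -> x = 0).

Definition projector_onto_along (Q : {linear V -> V}) (A E : V -> Prop) : Prop :=
  (forall f, Q (Q f) = Q f) /\
  (forall x, A x <-> exists f, x = Q f) /\
  (forall x, E x <-> Q x = 0).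

End Defs.

From HB Require Import structures.
From mathcomp Require Import all_boot all_order all_algebra.
Import GRing.Theory.
Local Open Scope ring_scope.

(* Since tilde B <= B, we have B^perp <= tilde B^perp, so both G f and
   tilde G (Q f) solve T u = Q f inside tilde B^perp; regularity of
   (T, tilde B) makes that solution unique. The hypotheses on E, Ker T and
   the surjectivity of T only serve to make Q and G well defined. *)

Section Perp.
Context {K : fieldType} {V : lmodType K}.

Lemma perp_span_sub {n m : nat} {b : 'I_n -> dualv K V} {bt : 'I_m -> dualv K V}
    {u : V} :
  (forall i, in_span b (bt i)) -> perp b u -> perp bt u.
Proof.
move=> bt_sub_b u_perp beta [c ->]; rewrite big1 // => i _.
by rewrite (u_perp (bt i) (bt_sub_b i)) mulr0.
Qed.

Lemma regular_solution_unique {T : V -> V} {m : nat} {bt : 'I_m -> dualv K V}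
    {f u1 u2 : V} :
  (forall f, exists! u, perp bt u /\ T u = f) ->
  perp bt u1 -> T u1 = f -> perp bt u2 -> T u2 = f -> u1 = u2.
Proof.
move=> regular u1_perp Tu1 u2_perp Tu2.
have [u [_ u_unique]] := regular f.
by rewrite -(u_unique u1 (conj u1_perp Tu1)) -(u_unique u2 (conj u2_perp Tu2)).
Qed.

End Perp.

Theorem proposition2 (K : fieldType) (V : lmodType K) (T : {linear V -> V})
  (n : nat) (b : 'I_n -> dualv K V)
  (m : nat) (bt : 'I_m -> dualv K V)
  (E : V -> Prop)
  (Q : {linear V -> V}) (G Gt : V -> V) :
  (forall f : V, exists u, T u = f) ->
  (forall i, in_span b (bt i)) ->
  subspace E ->
  (forall u, perp b u -> T u = 0 -> u = 0) ->
  direct_sum_decomp (fun x => exists u, perp b u /\ x = T u) E ->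
  (forall f, exists! u, perp bt u /\ T u = f) ->
  (forall f, perp bt (Gt f) /\ T (Gt f) = f) ->
  projector_onto_along Q (fun x => exists u, perp b u /\ x = T u) E ->
  (forall f, perp b (G f) /\ T (G f) = Q f) ->
  forall f, G f = Gt (Q f).
Proof.
move=> _ bt_sub_b _ _ _ regular Gt_sol _ G_sol f.
have [Gf_perp TGf] := G_sol f.
have [Gtf_perp TGtf] := Gt_sol (Q f).
exact: (regular_solution_unique regular
          (perp_span_sub bt_sub_b Gf_perp) TGf Gtf_perp TGtf).
Qed.
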